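(* Let $A$ be an algebra of Jordan type half over an algebraically closed field $\mathbb{F}$ of characteristic not $2$, let $a,b\in A$ be primitive axes with $\alpha=(a,b)\notin\{0,\frac14,1\}$, let $J=\langle\langle a,b\rangle\rangle$, and let $A=\bigoplus_{n\in\mathbb{Z}}A_n$ be the $\mathbb{Z}$-grading defined below. For $\xi\in\mathbb{F}\setminus\{0\}$ let $\phi_\xi:A\to A$ be the linear map acting as $\xi^n$ on $A_n$ for each $n$, and let $\Phi=\{\phi_\xi:\xi\in\mathbb{F}\setminus\{0\}\}$ (a group of automorphisms of $A$). Then $\Phi$ acts transitively on the set of idempotents of $J$ other than $0$ and $1_J$.
   Context: All algebras are commutative, not necessarily associative; $A_\lambda(x)=\{u:xu=\lambda u\}$, $\mathrm{ad}_x(u)=xu$. A primitive axis of Jordan type half is $x\neq0$, $x^2=x$, $A=A_1(x)\oplus A_0(x)\oplus A_{1/2}(x)$, $A_1(x)=\mathbb{F}x$, with fusion rules $A_1A_1\subseteq A_1$, $A_1A_0=0$, $A_0A_0\subseteq A_0$, $A_1A_{1/2},A_0A_{1/2}\subseteq A_{1/2}$, $A_{1/2}A_{1/2}\subseteq A_1\oplus A_0$. An algebra of Jordan type half is generated by such axes and has a unique Frobenius form $(\cdot,\cdot)$ (bilinear, $(uv,w)=(u,vw)$, $(x,x)=1$ for primitive axes). The grading: let $\zeta$ be a root of $x^2-(4\alpha-2)x+1$, $\mu=-\frac{1+\zeta}{4}$, $\nu=-\frac{1+\zeta^{-1}}{4}$, $s=\frac{1}{4(\alpha-1)}(\mu a+ab+\nu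 b)$, $t=\frac{1}{\alpha(\alpha-1)}(\nu a+ab+\mu b)$, $1_J=\frac{2}{\alpha-1}(ab-\frac12a-\frac12b)$ (the identity of $J$), $W=\{w\in A:(w,J)=0\}$, $\omega=\mathrm{ad}_s|_W$, $\chi=\mathrm{ad}_t|_W$; $A_{-2}=\mathbb{F}s$, $A_{-1}=\mathrm{im}\,\omega$, $A_0=\mathbb{F}1_J\oplus(\ker\omega\cap\ker\chi)$, $A_1=\mathrm{im}\,\chi$, $A_2=\mathbb{F}t$, $A_k=0$ otherwise; this is a direct sum decomposition of $A$ with $A_nA_m\subseteq A_{n+m}$. *)

From HB Require Import structures.
From mathcomp Require Import all_boot all_order all_algebra.
Set Implicit Arguments. Unset Strict Implicit. Unset Printing Implicit Defensive.
Import Order.TTheory GRing.Theory Num.Theory.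
Local Open Scope ring_scope.

Section JordanHalf.
Variables (F : fieldType) (A : lmodType F).
Variable mul : A -> A -> A.
Variable form : A -> A -> F.

Definition comm_bilinear_product : Prop :=
  (forall u v, mul u v = mul v u) /\
  (forall c u v w, mul u (c *: v + w) = c *: mul u v + mul u w).

Definition eigsp (x : A) (l : F) (u : A) : Prop := mul x u = l *: u.

Definition half : F := (2%:R)^-1.

Definition prim_axis_half (x : A) : Prop :=
  [/\ x != 0, mul x x = x,
   (forall u, exists u1 u0 uh, u = u1 + u0 + uh /\
      [/\ eigsp x 1 u1, eigsp x 0 u0 & eigsp x half uh]),
   (forall u, eigsp x 1 u -> exists c, u = c *: x) &
   ((forall u v, eigsp x 1 u -> eigsp x 1 v -> eigsp x 1 (mul u v)) /\ [/\
       (forall u v, eigsp x 1 u -> eigsp x 0 v -> mul u v = 0),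
       (forall u v, eigsp x 0 u -> eigsp x 0 v -> eigsp x 0 (mul u v)),
       (forall u v, eigsp x 1 u -> eigsp x half v -> eigsp x half (mul u v)),
       (forall u v, eigsp x 0 u -> eigsp x half v -> eigsp x half (mul u v)) &
       (forall u v, eigsp x half u -> eigsp x half v ->
          exists w1 w0, mul u v = w1 + w0 /\ eigsp x 1 w1 /\ eigsp x 0 w0)])].

Definition subalg_closed (S : A -> Prop) : Prop :=
  [/\ S 0, (forall u v, S u -> S v -> S (u + v)),
      (forall (c : F) u, S u -> S (c *: u)) &
      (forall u v, S u -> S v -> S (mul u v))].

Definition generated (X : A -> Prop) (u : A) : Prop :=
  forall S, subalg_closed S -> (forall x, X x -> S x) -> S u.

Definition jordan_half_algebra : Prop :=
  comm_bilinear_product /\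
  exists X : A -> Prop, (forall x, X x -> prim_axis_half x) /\
                        (forall u, generated X u).

Definition frobenius_form : Prop :=
  [/\ (forall c u v w, form (c *: u + v) w = c * form u w + form v w),
      (forall c u v w, form u (c *: v + w) = c * form u v + form u w),
      (forall u v w, form (mul u v) w = form u (mul v w)) &
      (forall x, prim_axis_half x -> form x x = 1)].

Variables (a b : A) (zeta : F).

Definition alpha : F := form a b.
Definition mu : F := - (1 + zeta) / 4%:R.
Definition nu : F := - (1 + zeta^-1) / 4%:R.
Definition s_el : A := (4%:R * (alpha - 1))^-1 *: (mu *: a + mul a b + nu *: b).
Definition t_el : A := (alpha * (alpha - 1))^-1 *: (nu *: a + mul a b + mu *: b).
Definition oneJ : A := (2%:R / (alpha - 1)) *: (mul a b - half *: a - half *: b).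

Definition inJ (u : A) : Prop := generated (fun x => x = a \/ x = b) u.

Definition inW (w : A) : Prop := forall j, inJ j -> form w j = 0.

Definition grade (n : int) (u : A) : Prop :=
  match n with
  | Negz 1 => exists c : F, u = c *: s_el                      (* n = -2 *)
  | Negz 0 => exists w, inW w /\ u = mul s_el w                (* n = -1 *)
  | Posz 0 => exists (c : F) w, [/\ inW w, mul s_el w = 0, mul t_el w = 0
                                   & u = c *: oneJ + w]
  | Posz 1 => exists w, inW w /\ u = mul t_el w
  | Posz 2 => exists c : F, u = c *: t_el
  | _ => u = 0
  end.

Definition is_phi (xi : F) (phi : A -> A) : Prop :=
  (forall (c : F) u v, phi (c *: u + v) = c *: phi u + phi v) /\
  (forall (n : int) u, grade n u -> phi u = (xi ^ n) *: u).

Definition nontriv_idem_J (e : A) : Prop :=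
  [/\ inJ e, mul e e = e, e != 0 & e != oneJ].

End JordanHalf.

(* By the fusion rules, J is spanned by a, b and ab, with an explicit multiplication table.
   In the basis s, 1_J, t this table reads s^2 = t^2 = 0, 1_J s = s, 1_J t = t and
   s t = 1_J / 8; it also shows that s, 1_J, t are independent, because 1_J a = a <> 0.
   Hence c0 s + c1 1_J + c2 t is an idempotent other than 0 and 1_J exactly when c1 = 1/2
   and c0 c2 = 1.  Since phi_xi multiplies c0 by xi^-2 and c2 by xi^2, any square root xi
   of c0/d0 maps the idempotent (c0, 1/2, 1/c0) to the idempotent (d0, 1/2, 1/d0). *)

From Pilot Require Import Defs.
From HB Require Import structures.
From mathcomp Require Import all_boot all_order all_algebra.
From mathcomp Require Import ring.
Set Implicit Arguments. Unset Strict Implicit. Unset Printing Implicit Defensive.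
Import Order.TTheory GRing.Theory Num.Theory.
Local Open Scope ring_scope.

Section LinearCombination.
Variable F : fieldType.

Fixpoint lincomb {V : lmodType F} (cs : seq F) (vs : seq V) : V :=
  match cs, vs with
  | c :: cs', v :: vs' => c *: v + lincomb cs' vs'
  | _, _ => 0
  end.

Fixpoint addcoef (cs ds : seq F) : seq F :=
  match cs, ds with
  | c :: cs', d :: ds' => (c + d) :: addcoef cs' ds'
  | [::], _ => ds
  | _, [::] => cs
  end.

Variables V W : lmodType F.

Lemma lincomb_cons c cs (v : V) vs : lincomb (c :: cs) (v :: vs) = c *: v + lincomb cs vs.
Proof. by []. Qed.

Lemma lincomb_nil (vs : seq V) : lincomb [::] vs = 0.
Proof. by case: vs. Qed.

Lemma lincombD cs ds (vs : seq V) :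
  lincomb cs vs + lincomb ds vs = lincomb (addcoef cs ds) vs.
Proof.
elim: cs ds vs => [|c cs IH] [|d ds] [|v vs] //=; rewrite ?add0r ?addr0 //.
by rewrite -IH scalerDl addrACA.
Qed.

Lemma lincombZ k cs (vs : seq V) : k *: lincomb cs vs = lincomb (map ( *%R k) cs) vs.
Proof.
elim: cs vs => [|c cs IH] [|v vs] /=; rewrite ?scaler0 //.
by rewrite scalerDr scalerA IH.
Qed.

Lemma lincombN cs (vs : seq V) : - lincomb cs vs = lincomb (map ( *%R (-1)) cs) vs.
Proof. by rewrite -lincombZ scaleN1r. Qed.

Lemma linear_fun0 (f : V -> W) :
  (forall c u v, f (c *: u + v) = c *: f u + f v) -> f 0 = 0.
Proof.
move=> f_lin; move: (f_lin 1 0 0); rewrite scaler0 addr0 scale1r.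
by move=> /esym/(canRL (addrK _)); rewrite subrr.
Qed.

Lemma lincomb_linear (f : V -> W) cs vs :
  (forall c u v, f (c *: u + v) = c *: f u + f v) ->
  f (lincomb cs vs) = lincomb cs (map f vs).
Proof.
move=> f_lin; have f0 := linear_fun0 f_lin.
by elim: cs vs => [|c cs IH] [|v vs] //=; rewrite f_lin IH.
Qed.

Lemma lincomb_elim2 (P : V -> V -> Prop) :
  (forall u1 u2, let us := [:: u1; u2] in
    P (lincomb [:: 1; 0] us) (lincomb [:: 0; 1] us)) ->
  forall u1 u2, P u1 u2.
Proof. by move=> HP u1 u2; move: (HP u1 u2); rewrite /= !scale1r !scale0r !addr0 !add0r. Qed.

Lemma lincomb_elim3 (P : V -> V -> V -> Prop) :
  (forall u1 u2 u3, let us := [:: u1; u2; u3] in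
    P (lincomb [:: 1; 0; 0] us) (lincomb [:: 0; 1; 0] us) (lincomb [:: 0; 0; 1] us)) ->
  forall u1 u2 u3, P u1 u2 u3.
Proof.
by move=> HP u1 u2 u3; move: (HP u1 u2 u3); rewrite /= !scale1r !scale0r !addr0 !add0r.
Qed.

Lemma lincomb_elim4 (P : V -> V -> V -> V -> Prop) :
  (forall u1 u2 u3 u4, let us := [:: u1; u2; u3; u4] in
    P (lincomb [:: 1; 0; 0; 0] us) (lincomb [:: 0; 1; 0; 0] us)
      (lincomb [:: 0; 0; 1; 0] us) (lincomb [:: 0; 0; 0; 1] us)) ->
  forall u1 u2 u3 u4, P u1 u2 u3 u4.
Proof.
move=> HP u1 u2 u3 u4; move: (HP u1 u2 u3 u4).
by rewrite /= !scale1r !scale0r !addr0 !add0r.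
Qed.

Lemma lincomb_elim6 (P : V -> V -> V -> V -> V -> V -> Prop) :
  (forall u1 u2 u3 u4 u5 u6, let us := [:: u1; u2; u3; u4; u5; u6] in
    P (lincomb [:: 1; 0; 0; 0; 0; 0] us) (lincomb [:: 0; 1; 0; 0; 0; 0] us)
      (lincomb [:: 0; 0; 1; 0; 0; 0] us) (lincomb [:: 0; 0; 0; 1; 0; 0] us)
      (lincomb [:: 0; 0; 0; 0; 1; 0] us) (lincomb [:: 0; 0; 0; 0; 0; 1] us)) ->
  forall u1 u2 u3 u4 u5 u6, P u1 u2 u3 u4 u5 u6.
Proof.
move=> HP u1 u2 u3 u4 u5 u6; move: (HP u1 u2 u3 u4 u5 u6).
by rewrite /= !scale1r !scale0r !addr0 !add0r.
Qed.

End LinearCombination.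

Arguments lincomb : simpl never.

(* [compare_coefs u1 .. un] reduces an identity between linear combinations of the
   vectors [ui] to the identities between their coefficients; a compound vector such as
   [mul a b] must be listed after the vectors it is built from. *)
Ltac lincomb_expand := rewrite ?lincomb_cons ?lincomb_nil ?addr0.
Ltac lincomb_coefs :=
  rewrite /= ?(lincombN, lincombZ, lincombD) /=;
  congr (lincomb _ _); repeat congr (_ :: _).

Tactic Notation "compare_coefs" constr(u1) constr(u2) :=
  lincomb_expand; move: (u1) (u2); apply: lincomb_elim2 => ? ?; lincomb_coefs.
Tactic Notation "compare_coefs" constr(u1) constr(u2) constr(u3) :=
  lincomb_expand; move: (u1) (u2) (u3); apply: lincomb_elim3 => ? ? ?; lincomb_coefs.
Tactic Notation "compare_coefs" constr(u1) constr(u2) constr(u3) constr(u4) :=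
  lincomb_expand; move: (u1) (u2) (u3) (u4);
  apply: lincomb_elim4 => ? ? ? ?; lincomb_coefs.
Tactic Notation "compare_coefs"
    constr(u1) constr(u2) constr(u3) constr(u4) constr(u5) constr(u6) :=
  lincomb_expand; move: (u1) (u2) (u3) (u4) (u5) (u6);
  apply: lincomb_elim6 => ? ? ? ? ? ?; lincomb_coefs.

Lemma closed_field_sqrt (F : closedFieldType) (c : F) : exists x : F, x ^+ 2 = c.
Proof.
have [x xP] := @solve_monicpoly F 2 (fun i => if i == 0%N then c else 0) isT.
by exists x; rewrite xP !big_ord_recl big_ord0 /= mulr1 mul0r !addr0.
Qed.

Lemma natr_pow2_neq0 (F : fieldType) n : (2%:R : F) != 0 -> (2 ^ n)%:R != 0 :> F.
Proof. by move=> two_neq0; rewrite natrX expf_neq0. Qed.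

Lemma idem_coords_cases (F : fieldType) (c0 c1 c2 : F) : (2%:R : F) != 0 ->
  c0 * c1 + c1 * c0 = c0 -> c1 * c1 + (c0 * c2 + c2 * c0) / 8%:R = c1 ->
  c1 * c2 + c2 * c1 = c2 ->
  [\/ [/\ c0 = 0, c1 = 0 & c2 = 0], [/\ c0 = 0, c1 = 1 & c2 = 0]
    | c1 = 2%:R^-1 /\ c0 * c2 = 1].
Proof.
move=> two_neq0 E0 E1 E2.
have [c1_half | c1_nhalf] := eqVneq c1 2%:R^-1.
  apply: Or33; split=> //; apply/eqP; rewrite -subr_eq0; apply/eqP.
  transitivity (4%:R * (c1 * c1 + (c0 * c2 + c2 * c0) / 8%:R - c1)).
    by rewrite c1_half; field; rewrite two_neq0 (natr_pow2_neq0 3 two_neq0).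
  by rewrite E1 subrr mulr0.
have c1_neq : c1 + c1 - 1 != 0.
  apply: contra_neq c1_nhalf => E; apply: (mulfI two_neq0).
  by rewrite mulfV // -[RHS]addr0 -E; ring.
have eq0_of c : c * c1 + c1 * c = c -> c = 0.
  move=> E; have : c * (c1 + c1 - 1) = 0 by rewrite -(subrr c) -{2}E; ring.
  by move/eqP; rewrite mulf_eq0 (negbTE c1_neq) orbF => /eqP.
have c0_0 := eq0_of _ E0; have c2_0 : c2 = 0 by apply: eq0_of; rewrite addrC.
move: E1; rewrite c0_0 c2_0 !mul0r add0r mul0r addr0 => /eqP.
rewrite -subr_eq0 -{3}[c1]mulr1 -mulrBr mulf_eq0 subr_eq0 => /orP[]/eqP c1E.
  by apply: Or31.
by apply: Or32.
Qed.

Section CommutativeAlgebra.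
Variables (F : fieldType) (A : lmodType F) (mul : A -> A -> A) (form : A -> A -> F).
Hypothesis mulP : comm_bilinear_product mul.
Hypothesis formP : frobenius_form mul form.
Hypothesis two_neq0 : (2%:R : F) != 0.
Local Notation h := (Defs.half F).

Lemma half_neq0 : h != 0.
Proof. by rewrite invr_eq0. Qed.

Lemma half_neq1 : h != 1.
Proof.
apply/eqP => h1; have : 1 - h = h by rewrite /Defs.half; field.
by rewrite h1 subrr => /esym/eqP; rewrite oner_eq0.
Qed.

Lemma four_neq0 : (4%:R : F) != 0.
Proof. exact: (natr_pow2_neq0 2 two_neq0). Qed.

Lemma eight_neq0 : (8%:R : F) != 0.
Proof. exact: (natr_pow2_neq0 3 two_neq0). Qed.

Lemma mulC u v : mul u v = mul v u.
Proof. by case: mulP. Qed.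

Lemma mulr_linear u c v w : mul u (c *: v + w) = c *: mul u v + mul u w.
Proof. by case: mulP. Qed.

Lemma mulv0 u : mul u 0 = 0.
Proof. exact: linear_fun0 (mulr_linear u). Qed.

Lemma mul0v u : mul 0 u = 0.
Proof. by rewrite mulC mulv0. Qed.

Lemma mulDr u v w : mul u (v + w) = mul u v + mul u w.
Proof. by have := mulr_linear u 1 v w; rewrite !scale1r. Qed.

Lemma mulZr u c v : mul u (c *: v) = c *: mul u v.
Proof. by rewrite -[c *: v]addr0 mulr_linear mulv0 addr0. Qed.

Lemma mulNr u v : mul u (- v) = - mul u v.
Proof. by rewrite -scaleN1r mulZr scaleN1r. Qed.

Lemma mulDl u v w : mul (v + w) u = mul v u + mul w u.
Proof. by rewrite !(mulC _ u) mulDr. Qed.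

Lemma mulZl u c v : mul (c *: v) u = c *: mul v u.
Proof. by rewrite !(mulC _ u) mulZr. Qed.

Lemma mulNl u v : mul (- v) u = - mul v u.
Proof. by rewrite !(mulC _ u) mulNr. Qed.

Lemma formA u v w : form (mul u v) w = form u (mul v w).
Proof. by case: formP. Qed.

Lemma form_linear u c v w : form u (c *: v + w) = c * form u v + form u w.
Proof. by case: formP. Qed.

Lemma form0l u : form 0 u = 0.
Proof.
case: formP => formL _ _ _.
exact: (linear_fun0 (f := form^~ u : A -> F^o) (fun c v w => formL c v w u)).
Qed.

Lemma formDr u v w : form u (v + w) = form u v + form u w.
Proof. by have := form_linear u 1 v w; rewrite scale1r mul1r. Qed.

Lemma formZr u c v : form u (c *: v) = c * form u v.
Proof.
have form0 : form u 0 = 0 := linear_fun0 (f := form u : A -> F^o) (form_linear u).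
by rewrite -[c *: v]addr0 form_linear form0 addr0.
Qed.

Lemma form_idemC x y : mul y y = y -> form x y = form y x.
Proof.
move=> yy; have -> : form x y = form y (mul x y) by rewrite -{1}yy -formA {1}(mulC x y) formA.
by rewrite -{3}yy formA (mulC y x).
Qed.

Lemma form_idem_eigsp x l u :
  mul x x = x -> eigsp mul x l u -> l != 1 -> form x u = 0.
Proof.
move=> xx xu l_neq1; have : form x u = l * form x u by rewrite -{1}xx formA xu formZr.
move/eqP; rewrite -subr_eq0 -{1}[form x u]mul1r -mulrBl mulf_eq0 subr_eq0 eq_sym.
by rewrite (negbTE l_neq1) => /eqP.
Qed.

Lemma eigspD x l u v : eigsp mul x l u -> eigsp mul x l v -> eigsp mul x l (u + v).
Proof. by rewrite /eigsp mulDr scalerDr => -> ->. Qed.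

Lemma eigspZ x l c u : eigsp mul x l u -> eigsp mul x l (c *: u).
Proof. by rewrite /eigsp mulZr => ->; rewrite !scalerA mulrC. Qed.

Section Axis.
Variable x : A.
Hypothesis x_axis : prim_axis_half mul x.

Lemma axis_idem : mul x x = x.
Proof. by case: x_axis. Qed.

Lemma form_axis : form x x = 1.
Proof. by case: formP => _ _ _; apply. Qed.

Lemma eigsp_half_part u1 u0 uh :
  eigsp mul x 1 u1 -> eigsp mul x 0 u0 -> eigsp mul x h uh ->
  mul x (u1 + u0 + uh) - mul x (mul x (u1 + u0 + uh)) = (h * h) *: uh.
Proof.
move=> E1 E0 Eh; rewrite !(mulDr, mulZr, E1, E0, Eh).
by compare_coefs u1 u0 uh; rewrite /Defs.half; field.
Qed.

Lemma eigsp_half_unique u1 u0 uh v1 v0 vh :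
  eigsp mul x 1 u1 -> eigsp mul x 0 u0 -> eigsp mul x h uh ->
  eigsp mul x 1 v1 -> eigsp mul x 0 v0 -> eigsp mul x h vh ->
  u1 + u0 + uh = v1 + v0 + vh -> uh = vh.
Proof.
move=> Eu1 Eu0 Euh Ev1 Ev0 Evh E.
have := eigsp_half_part Eu1 Eu0 Euh; rewrite E eigsp_half_part //.
by move/(scalerI (mulf_neq0 half_neq0 half_neq0)).
Qed.

Lemma axis_decomp y : exists y0 yh, [/\ y = form x y *: x + y0 + yh,
  mul x y = form x y *: x + h *: yh, eigsp mul x 0 y0 & eigsp mul x h yh].
Proof.
case: x_axis => _ xx decomp A1 _.
have [y1 [y0 [yh [-> [E1 E0 Eh]]]]] := decomp y.
have [k ->] := A1 _ E1.
have form_xy : form x (k *: x + y0 + yh) = k.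
  rewrite !formDr formZr form_axis mulr1.
  have zero_neq1 : (0 : F) != 1 by rewrite eq_sym oner_neq0.
  by rewrite (form_idem_eigsp xx E0 zero_neq1) (form_idem_eigsp xx Eh half_neq1) !addr0.
exists y0, yh; rewrite form_xy; split => //.
by rewrite !mulDr mulZr xx E0 Eh scale0r addr0.
Qed.

Lemma mul_axis_axis y : mul x (mul x y) = h *: mul x y + (h * form x y) *: x.
Proof.
have [y0 [yh [_ -> _ Eh]]] := axis_decomp y.
rewrite mulDr !mulZr axis_idem Eh.
by compare_coefs x yh; rewrite /Defs.half; field.
Qed.

Lemma idem_axis_fusion y y0 yh : mul y y = y ->
  y = form x y *: x + y0 + yh -> eigsp mul x 0 y0 -> eigsp mul x h yh ->
  2%:R *: mul y0 yh = (1 - form x y) *: yh.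
Proof.
move=> yy Ey E0 Eh; set k := form x y in Ey *.
case: x_axis => _ xx _ A1 [_ [_ f00 _ f0h fhh]].
have [w1 [w0 [Eyh2 [Ew1 Ew0]]]] := fhh _ _ Eh Eh.
have [k2 Ek2] := A1 _ Ew1.
have Ey2 : mul y y = ((k * k + k2) *: x) + (mul y0 y0 + w0) + (k *: yh + 2%:R *: mul y0 yh).
  rewrite {1 2}Ey !(mulDl, mulDr, mulZl, mulZr) (mulC y0 x) (mulC yh x) (mulC yh y0).
  rewrite xx E0 Eh Eyh2 Ek2.
  by compare_coefs x y0 yh (mul y0 y0) (mul y0 yh) w0; rewrite /Defs.half; field.
have x1 : eigsp mul x 1 x by rewrite /eigsp xx scale1r.
have := eigsp_half_unique (eigspZ (k * k + k2) x1) (eigspD (f00 _ _ E0 E0) Ew0)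
  (eigspD (eigspZ k Eh) (eigspZ 2%:R (f0h _ _ E0 Eh))) (eigspZ k x1) E0 Eh.
rewrite -Ey2 yy -Ey => /(_ erefl) E.
by rewrite scalerBl scale1r addrC; apply: (canRL (addKr _)).
Qed.

(* [y + (x,y) x - 2 xy] and [xy - (x,y) x] are the [A_0(x)]-component of [y] and half its
   [A_{1/2}(x)]-component. *)
Lemma mul_axis_idem y : mul y y = y ->
  2%:R *: mul (y + form x y *: x - 2%:R *: mul x y) (mul x y - form x y *: x) =
  (1 - form x y) *: (mul x y - form x y *: x).
Proof.
move=> yy; have [y0 [yh [Ey Exy E0 Eh]]] := axis_decomp y.
have fusion := idem_axis_fusion yy Ey E0 Eh.
set k := form x y in Ey Exy fusion *.
have -> : y + k *: x - 2%:R *: mul x y = y0.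
  by rewrite Exy {1}Ey; compare_coefs x y0 yh; rewrite /Defs.half; field.
have -> : mul x y - k *: x = h *: yh by rewrite Exy addrC addKr.
by rewrite mulZr scalerA (mulrC 2%:R) -scalerA fusion !scalerA mulrC.
Qed.

End Axis.

Section TwoAxes.
Variables a b : A.
Hypotheses (a_axis : prim_axis_half mul a) (b_axis : prim_axis_half mul b).
Local Notation ab := (mul a b).
Local Notation al := (form a b).

Lemma mul_a_ab : mul a ab = h *: ab + (h * al) *: a.
Proof. exact: mul_axis_axis. Qed.

Lemma mul_b_ab : mul b ab = h *: ab + (h * al) *: b.
Proof.
by rewrite (mulC a b) mul_axis_axis // (form_idemC _ (axis_idem a_axis)).
Qed.

Lemma mul_ab_ab : mul ab ab = (h * h * al) *: a + (h * h * al) *: b + (h * al) *: ab.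
Proof.
have := mul_axis_idem a_axis (axis_idem b_axis).
rewrite !(mulDl, mulDr, mulZl, mulZr, mulNl, mulNr) (mulC b a) (mulC ab a).
rewrite mul_a_ab mul_b_ab (axis_idem a_axis) => /eqP; rewrite -subr_eq0 => /eqP E.
(* [mul ab ab] occurs in [E] with coefficient [-4]. *)
rewrite -[RHS]addr0 -(scaler0 _ (- (h * h))) -E.
by compare_coefs a b ab (mul ab ab); rewrite /Defs.half; field.
Qed.

Lemma mul_span_ab x1 y1 z1 x2 y2 z2 :
  mul (lincomb [:: x1; y1; z1] [:: a; b; ab]) (lincomb [:: x2; y2; z2] [:: a; b; ab]) =
  lincomb [:: x1 * x2 + h * al * (x1 * z2 + z1 * x2) + h * h * al * z1 * z2;
             y1 * y2 + h * al * (y1 * z2 + z1 * y2) + h * h * al * z1 * z2;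
             x1 * y2 + y1 * x2 + h * (x1 * z2 + z1 * x2 + y1 * z2 + z1 * y2)
               + h * al * z1 * z2] [:: a; b; ab].
Proof.
rewrite !lincomb_cons !lincomb_nil !addr0 !(mulDl, mulDr, mulZl, mulZr).
rewrite (mulC b a) (mulC ab a) (mulC ab b) mul_a_ab mul_b_ab mul_ab_ab.
rewrite (axis_idem a_axis) (axis_idem b_axis).
by compare_coefs a b ab; ring.
Qed.

End TwoAxes.

Section Grading.
Variables (a b : A) (zeta : F).
Hypotheses (a_axis : prim_axis_half mul a) (b_axis : prim_axis_half mul b).
Hypotheses (al_neq0 : form a b != 0) (al_neq1 : form a b != 1).
Hypothesis zetaP : zeta ^+ 2 - (4%:R * form a b - 2%:R) * zeta + 1 = 0.
Local Notation ab := (mul a b).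
Local Notation al := (form a b).
Local Notation mu := (Defs.mu zeta).
Local Notation nu := (Defs.nu zeta).
Local Notation s := (s_el mul form a b zeta).
Local Notation o := (oneJ mul form a b).
Local Notation t := (t_el mul form a b zeta).
Local Notation ks := ((4%:R * (al - 1))^-1).
Local Notation k1 := (2%:R / (al - 1)).
Local Notation kt := ((al * (al - 1))^-1).

Definition sot c0 c1 c2 : A := lincomb [:: c0; c1; c2] [:: s; o; t].

Lemma zeta_neq0 : zeta != 0.
Proof.
by apply/eqP => z0; move: zetaP; rewrite z0 expr0n mulr0 subrr add0r => /eqP; rewrite oner_eq0.
Qed.

Lemma alpha_zeta : al = (zeta + 1) ^+ 2 / (4%:R * zeta).
Proof.
have E : (zeta + 1) ^+ 2 = al * (4%:R * zeta).
  by apply/eqP; rewrite -subr_eq0; apply/eqP; rewrite -zetaP; ring.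
by rewrite E mulfK // mulf_neq0 ?four_neq0 ?zeta_neq0.
Qed.

Lemma alpha_sub1 : al - 1 = (zeta - 1) ^+ 2 / (4%:R * zeta).
Proof. by rewrite alpha_zeta; field; rewrite four_neq0 zeta_neq0. Qed.

Lemma zeta_add1_neq0 : zeta + 1 != 0.
Proof. by apply: contraNneq al_neq0; rewrite alpha_zeta => ->; rewrite expr0n mul0r. Qed.

Lemma zeta_sub1_neq0 : zeta - 1 != 0.
Proof.
apply: contraNneq al_neq1; rewrite -subr_eq0 alpha_sub1 => ->.
by rewrite expr0n mul0r.
Qed.

Lemma sot_ab c0 c1 c2 : sot c0 c1 c2 =
  lincomb [:: c0 * ks * mu - c1 * k1 * h + c2 * kt * nu;
             c0 * ks * nu - c1 * k1 * h + c2 * kt * mu;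
             c0 * ks + c1 * k1 + c2 * kt] [:: a; b; ab].
Proof.
rewrite /sot /s_el /oneJ /t_el /alpha.
by compare_coefs a b ab; ring.
Qed.

Ltac zeta_field := rewrite /Defs.mu /Defs.nu /Defs.half; field;
  rewrite ?two_neq0 ?four_neq0 ?eight_neq0 ?zeta_neq0 ?zeta_sub1_neq0 ?zeta_add1_neq0.

Lemma mul_sot c0 c1 c2 d0 d1 d2 :
  mul (sot c0 c1 c2) (sot d0 d1 d2) =
  sot (c0 * d1 + c1 * d0) (c1 * d1 + (c0 * d2 + c2 * d0) / 8%:R) (c1 * d2 + c2 * d1).
Proof.
rewrite !sot_ab mul_span_ab //; congr (lincomb _ _); rewrite alpha_sub1 alpha_zeta.
by congr [:: _; _; _]; zeta_field.
Qed.

Lemma sot_s : sot 1 0 0 = s.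
Proof. by rewrite /sot !lincomb_cons lincomb_nil !(scale1r, scale0r, addr0, add0r). Qed.

Lemma sot_o : sot 0 1 0 = o.
Proof. by rewrite /sot !lincomb_cons lincomb_nil !(scale1r, scale0r, addr0, add0r). Qed.

Lemma sot_t : sot 0 0 1 = t.
Proof. by rewrite /sot !lincomb_cons lincomb_nil !(scale1r, scale0r, addr0, add0r). Qed.

Lemma sot0 : sot 0 0 0 = 0.
Proof. by rewrite /sot !lincomb_cons lincomb_nil !(scale1r, scale0r, addr0, add0r). Qed.

Lemma sotZ k c0 c1 c2 : k *: sot c0 c1 c2 = sot (k * c0) (k * c1) (k * c2).
Proof. exact: lincombZ. Qed.

Lemma sotD c0 c1 c2 d0 d1 d2 :
  sot c0 c1 c2 + sot d0 d1 d2 = sot (c0 + d0) (c1 + d1) (c2 + d2).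
Proof. exact: lincombD. Qed.

Lemma axis_a_sot : a = sot (- (4%:R * zeta / (zeta + 1))) h (- ((zeta + 1) / (4%:R * zeta))).
Proof. by rewrite sot_ab alpha_sub1 alpha_zeta; compare_coefs a b ab; zeta_field. Qed.

Lemma axis_b_sot : b = sot (- (4%:R / (zeta + 1))) h (- ((zeta + 1) / 4%:R)).
Proof. by rewrite sot_ab alpha_sub1 alpha_zeta; compare_coefs a b ab; zeta_field. Qed.

Lemma inJ_sot e : inJ mul a b e -> exists c0 c1 c2, e = sot c0 c1 c2.
Proof.
move/(_ (fun u => exists c0 c1 c2, u = sot c0 c1 c2)); apply.
  split.
  - by exists 0, 0, 0; rewrite sot0.
  - move=> _ _ [c0 [c1 [c2 ->]]] [d0 [d1 [d2 ->]]].
    by rewrite sotD; do 3 eexists.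
  - by move=> k _ [c0 [c1 [c2 ->]]]; rewrite sotZ; do 3 eexists.
  - by move=> _ _ [c0 [c1 [c2 ->]]] [d0 [d1 [d2 ->]]]; rewrite mul_sot; do 3 eexists.
by move=> _ [] ->; do 3 eexists; [exact: axis_a_sot | exact: axis_b_sot].
Qed.

Lemma mul_o_sot c0 c1 c2 : mul o (sot c0 c1 c2) = sot c0 c1 c2.
Proof. by rewrite -sot_o mul_sot; congr (sot _ _ _); ring. Qed.

Lemma mul_s_t : mul s t = 8%:R^-1 *: o.
Proof. by rewrite -sot_s -sot_t -sot_o mul_sot sotZ; congr (sot _ _ _); ring. Qed.

Lemma o_neq0 : o != 0.
Proof.
apply/eqP => o0; have [/eqP a_neq0 _ _ _ _] := a_axis; apply: a_neq0.
by rewrite axis_a_sot -mul_o_sot o0 mul0v.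
Qed.

Lemma sot_eq0 c0 c1 c2 : sot c0 c1 c2 = 0 -> [/\ c0 = 0, c1 = 0 & c2 = 0].
Proof.
move=> w0; have scale_eq0 k (v : A) : v != 0 -> k *: v = 0 -> k = 0.
  by move=> v_neq0 /eqP; rewrite scaler_eq0 (negbTE v_neq0) orbF => /eqP.
have eighth_neq0 : 8%:R^-1 != 0 :> F by rewrite invr_eq0 eight_neq0.
have s_neq0 : s != 0.
  apply/eqP => s0; move: mul_s_t; rewrite s0 mul0v.
  by move/esym/(scale_eq0 _ _ o_neq0)/eqP; rewrite (negbTE eighth_neq0).
have t_neq0 : t != 0.
  apply/eqP => t0; move: mul_s_t; rewrite t0 mulv0.
  by move/esym/(scale_eq0 _ _ o_neq0)/eqP; rewrite (negbTE eighth_neq0).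
have c2_0 : c2 = 0.
  have : mul s (mul s (sot c0 c1 c2)) = (8%:R^-1 * c2) *: s.
    by rewrite -sot_s !mul_sot sotZ; congr (sot _ _ _); ring.
  rewrite w0 !mulv0 => /esym/(scale_eq0 _ _ s_neq0)/eqP.
  by rewrite mulf_eq0 (negbTE eighth_neq0) => /eqP.
have c0_0 : c0 = 0.
  have : mul t (mul t (sot c0 c1 c2)) = (8%:R^-1 * c0) *: t.
    by rewrite -sot_t !mul_sot sotZ; congr (sot _ _ _); ring.
  rewrite w0 !mulv0 => /esym/(scale_eq0 _ _ t_neq0)/eqP.
  by rewrite mulf_eq0 (negbTE eighth_neq0) => /eqP.
split=> //; apply: (scale_eq0 _ _ o_neq0).
by rewrite -w0 c0_0 c2_0 -sot_o sotZ; congr (sot _ _ _); ring.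
Qed.

Lemma sot_inj c0 c1 c2 d0 d1 d2 :
  sot c0 c1 c2 = sot d0 d1 d2 -> [/\ c0 = d0, c1 = d1 & c2 = d2].
Proof.
move=> E; have : sot (c0 - d0) (c1 - d1) (c2 - d2) = sot c0 c1 c2 + (-1) *: sot d0 d1 d2.
  by rewrite sotZ sotD; congr (sot _ _ _); ring.
by rewrite E scaleN1r subrr => /sot_eq0 [/subr0_eq ? /subr0_eq ? /subr0_eq ?].
Qed.

Lemma nontriv_idem_sot e : nontriv_idem_J mul form a b e ->
  exists2 c, c != 0 & e = sot c h c^-1.
Proof.
case=> /inJ_sot [c0 [c1 [c2 ->]]] ee e_neq0 e_neq_o.
move: ee; rewrite mul_sot => /sot_inj [E0 E1 E2].
have [[c0_0 c1_0 c2_0] | [c0_0 c1_1 c2_0] | [c1_h c0c2]] :=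
  idem_coords_cases two_neq0 E0 E1 E2.
- by move: e_neq0; rewrite c0_0 c1_0 c2_0 sot0 eqxx.
- by move: e_neq_o; rewrite c0_0 c1_1 c2_0 sot_o eqxx.
have c0_neq0 : c0 != 0.
  by apply/eqP => c0_0; move: c0c2; rewrite c0_0 mul0r => /eqP; rewrite eq_sym oner_eq0.
have c2_inv : c2 = c0^-1 by rewrite -[c0^-1]mulr1 -c0c2 mulKf.
by exists c0; rewrite // c1_h c2_inv.
Qed.

Lemma is_phi_sot xi phi c0 c1 c2 : is_phi mul form a b zeta xi phi ->
  phi (sot c0 c1 c2) = sot (xi ^- 2 * c0) c1 (xi ^+ 2 * c2).
Proof.
case=> phi_lin phi_grade.
have phi_s : phi s = xi ^- 2 *: s by apply: (phi_grade (Negz 1)); exists 1; rewrite scale1r.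
have phi_t : phi t = xi ^+ 2 *: t by apply: (phi_grade 2); exists 1; rewrite scale1r.
have phi_o : phi o = o.
  rewrite -[RHS]scale1r; apply: (phi_grade 0); exists 1, 0; split.
  - by move=> j _; rewrite form0l.
  - exact: mulv0.
  - exact: mulv0.
  - by rewrite scale1r addr0.
rewrite /sot (lincomb_linear _ _ phi_lin) /= phi_s phi_o phi_t.
by rewrite !lincomb_cons !scalerA (mulrC c0) (mulrC c2).
Qed.

End Grading.
End CommutativeAlgebra.

Theorem proposition5p5 (F : closedFieldType) (A : lmodType F)
  (mul : A -> A -> A) (form : A -> A -> F) (a b : A) (zeta : F) :
  (2%:R : F) != 0 ->
  jordan_half_algebra mul ->
  frobenius_form mul form ->
  prim_axis_half mul a -> prim_axis_half mul b ->
  form a b != 0 -> form a b != (4%:R)^-1 -> form a b != 1 ->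
  zeta ^+ 2 - (4%:R * form a b - 2%:R) * zeta + 1 = 0 ->
  forall e e' : A,
    nontriv_idem_J mul form a b e -> nontriv_idem_J mul form a b e' ->
    exists xi : F, xi != 0 /\
      forall phi : A -> A, is_phi mul form a b zeta xi phi -> phi e = e'.
Proof.
move=> two_neq0 [mulP _] formP a_axis b_axis al_neq0 _ al_neq1 zetaP e e' He He'.
have idem_sot := nontriv_idem_sot mulP formP two_neq0 a_axis b_axis al_neq0 al_neq1 zetaP.
have [c c_neq0 ->] := idem_sot _ He.
have [d d_neq0 ->] := idem_sot _ He'.
have [xi xi2] := closed_field_sqrt (c / d).
exists xi; split.
  apply/eqP => xi0; move: xi2; rewrite xi0 expr0n => /esym/eqP.
  by rewrite mulf_eq0 invr_eq0 (negbTE c_neq0) (negbTE d_neq0).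
move=> phi /(is_phi_sot mulP formP) ->; rewrite xi2.
by congr sot; field; rewrite c_neq0 d_neq0.
Qed.
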